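(* Let $\Phi$ be an irreducible crystallographic root system, $k$ a positive integer, $R$ a dominant region of the $k$-Catalan arrangement of $\Phi$, $B$ the pseudomaximal alcove of $R$, $t\le k$ a positive integer and $\alpha\in\Phi^+$. If $\langle x_0,\alpha\rangle>t$ for some $x_0\in R$, then $\langle x,\alpha\rangle>t$ for all $x\in B$.
   Context: $\Phi$ lives in a Euclidean space $V$ with inner product $\langle\cdot,\cdot\rangle$, simple system $S$, positive system $\Phi^+$. $H_\alpha^r=\{x\mid\langle x,\alpha\rangle=r\}$. The $K$-Catalan arrangement consists of $H_\alpha^r$, $\alpha\in\Phi$, $r\in\{0,\ldots,K\}$; regions are components of its complement, dominant if $\langle x,\alpha\rangle>0$ for all $\alpha\in\Phi^+$, $x\in R$. Alcoves are the connected components of the complement of all $H_\alpha^r$, $\alpha\in\Phi$, $r\in\mathbb{Z}$; for an alcove $A$ and $\alpha\in\Phi^+$, $r(A,\alpha)$ is the unique integer $r$ with $r-1<\langle x,\alpha\rangle<r$ on $A$. Root poset: $\alpha\le\beta$ iff $\beta-\alpha$ is a nonnegative integer combination of $S$; ideals are down-closed. For a dominant region $R$ of the $K$-Catalan arrangement, $\theta(R)=(I_1,\ldots,I_K)$ with $I_i=\{\alpha\in\Phi^+\mid\langle x,\alpha\rangle<i\ \forall x\in R\}$; $\theta$ is known to be a bijection onto geometric chains of $K$ ideals (chains $I_1\subseteq\cdots\subseteq I_K$ with $J_i=\Phi^+\setminus I_i$ such that $(I_i+I_j)\cap\Phi^+\subseteq I_{i+j}$ for $i+j\le K$ and $(J_i+J_j)\cap\Phi^+\subseteq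 J_{i+j}$ for $i,j\in\{0,\ldots,K\}$, with $I_0=\varnothing$, $J_0=\Phi^+$, $J_i=J_K$ for $i>K$), and bounded regions correspond to positive chains ($S\subseteq I_K$). For a chain $\mathcal{I}$ of $K$ ideals, $r_\alpha(\mathcal{I})=\min\{r_1+\cdots+r_m\mid\alpha=\alpha_1+\cdots+\alpha_m,\alpha_i\in I_{r_i}\}$ ($\infty$ if none). For a bounded dominant region with chain $\mathcal{I}$, its maximal alcove is the alcove $B$ with $r(B,\alpha)=r_\alpha(\mathcal{I})$ for all $\alpha\in\Phi^+$. For a dominant region $R$ of the $k$-Catalan arrangement with $\mathcal{I}=\theta(R)$, let $\underline{\mathcal{I}}=(I_1,\ldots,I_k,\underline{I}_{k+1})$ with $\underline{I}_{k+1}=\bigcup_{i+j=k+1}((I_i+I_j)\cap\Phi^+)\cup I_k\cup S$ (a positive geometric chain of $k+1$ ideals); the pseudomaximal alcove of $R$ is the maximal alcove of the bounded dominant region $\theta^{-1}(\underline{\mathcal{I}})$ of the $(k+1)$-Catalan arrangement, i.e. the alcove $B$ with $r(B,\alpha)=r_\alpha(\underline{\mathcal{I}})$ for all $\alpha\in\Phi^+$. *)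

From HB Require Import structures.
From mathcomp Require Import all_boot all_order all_algebra.
From mathcomp Require Import classical_sets reals topology normedtype.
Set Implicit Arguments. Unset Strict Implicit. Unset Printing Implicit Defensive.
Import Order.TTheory GRing.Theory Num.Theory.
Import numFieldTopology.Exports numFieldNormedType.Exports.
Local Open Scope ring_scope.

Section RootSystems.
Variables (R : realType) (n : nat).
Local Notation V := 'rV[R]_n.

Definition dot (u v : V) : R := (u *m v^T) 0 0.

Definition root_system (Phi : seq V) : Prop :=
  [/\ (0 : V) \notin Phi,
      (<<Phi>>%VS = fullv),
      (forall a b, a \in Phi -> b \in Phi ->
          b - (2 * dot b a / dot a a) *: a \in Phi),
      (forall a b, a \in Phi -> b \in Phi ->
          (2 * dot b a / dot a a) \is a Num.int) &
      (forall a (c : R), a \in Phi -> c *: a \in Phi -> c = 1 \/ c = -1)].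

(* Irreducible: Phi cannot be split into two nonempty mutually orthogonal parts. *)
Definition irreducible_rs (Phi : seq V) : Prop :=
  forall P : V -> Prop,
    (exists a, a \in Phi /\ P a) -> (exists b, b \in Phi /\ ~ P b) ->
    exists a b, [/\ a \in Phi, b \in Phi, P a, ~ P b & dot a b != 0].

Definition nnint_comb (S : seq V) (v : V) : Prop :=
  exists c : 'I_(size S) -> nat, v = \sum_(i < size S) (c i)%:R *: S`_i.

Definition simple_system (Phi S : seq V) : Prop :=
  [/\ {subset S <= Phi}, free S &
      forall a, a \in Phi -> nnint_comb S a \/ nnint_comb S (- a)].

Definition pos_root (Phi S : seq V) (a : V) : Prop := a \in Phi /\ nnint_comb S a.

Definition catalan_complement (Phi : seq V) (K : nat) : set V :=
  [set x | forall a r, a \in Phi -> (r <= K)%N -> dot x a != r%:R].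

Definition affine_complement (Phi : seq V) : set V :=
  [set x | forall a (r : int), a \in Phi -> dot x a != r%:~R].

Definition is_component (A C : set V) : Prop :=
  exists x, A x /\ C = connected_component A x.

Definition dominant_region (Phi S : seq V) (K : nat) (Rg : set V) : Prop :=
  is_component (catalan_complement Phi K) Rg /\
  forall x a, Rg x -> pos_root Phi S a -> 0 < dot x a.

Definition alcove (Phi : seq V) (B : set V) : Prop :=
  is_component (affine_complement Phi) B.

Definition theta_ideal (Phi S : seq V) (Rg : set V) (i : nat) (a : V) : Prop :=
  pos_root Phi S a /\ forall x, Rg x -> dot x a < i%:R.

Definition sum_pos (Phi S : seq V) (P Q : V -> Prop) (a : V) : Prop :=
  pos_root Phi S a /\ exists b c, [/\ P b, Q c & a = b + c].

Definition under_ideal (Phi S : seq V) (k : nat) (Rg : set V) (a : V) : Prop :=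
  (exists i j, [/\ (1 <= i)%N, (1 <= j)%N, (i + j = k.+1)%N &
       sum_pos Phi S (theta_ideal Phi S Rg i) (theta_ideal Phi S Rg j) a])
  \/ theta_ideal Phi S Rg k a \/ a \in S.

(* the chain (I_1, ..., I_k, underline I_{k+1}); the index is in 1..k+1,
   other indices give the empty set. *)
Definition under_chain (Phi S : seq V) (k : nat) (Rg : set V) (i : nat) (a : V)
  : Prop :=
  if (1 <= i <= k)%N then theta_ideal Phi S Rg i a
  else if i == k.+1 then under_ideal Phi S k Rg a else False.

(* r is the value r_1 + ... + r_m of some decomposition a = a_1 + ... + a_m
   with a_j in I_{r_j} (s lists the pairs (a_j, r_j)). *)
Definition decomp_value (I : nat -> V -> Prop) (a : V) (r : nat) : Prop :=
  exists s : seq (V * nat),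
    [/\ a = \sum_(p <- s) p.1, (forall p, p \in s -> I p.2 p.1) &
        r = (\sum_(p <- s) p.2)%N].

Definition r_alpha_is (I : nat -> V -> Prop) (a : V) (r : nat) : Prop :=
  decomp_value I a r /\ forall r', decomp_value I a r' -> (r <= r')%N.

Definition pseudomaximal_alcove (Phi S : seq V) (k : nat) (Rg B : set V) : Prop :=
  alcove Phi B /\
  forall b, pos_root Phi S b ->
    exists r : nat, r_alpha_is (under_chain Phi S k Rg) b r /\
      forall x, B x -> r%:R - 1 < dot x b /\ dot x b < r%:R.

End RootSystems.

From HB Require Import structures.
From mathcomp Require Import all_boot all_order all_algebra.
From mathcomp Require Import classical_sets reals topology normedtype.
Import Order.TTheory GRing.Theory Num.Theory.
Import numFieldTopology.Exports numFieldNormedType.Exports.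
Set Implicit Arguments. Unset Strict Implicit. Unset Printing Implicit Defensive.
Local Open Scope ring_scope.

(* Every ideal I_i of the chain bounds <x, .> on R by i, so any decomposition
   of alpha with value r <= k gives <x0, alpha> <= r on R.  Hence the value
   r = r(B, alpha) exceeds t, and on B we get <x, alpha> > r - 1 >= t. *)

Section PseudomaximalAlcove.
Variables (R : realType) (n : nat).
Local Notation V := 'rV[R]_n.

Lemma dotD (x u v : V) : dot x (u + v) = dot x u + dot x v.
Proof. by rewrite /dot linearD /= mulmxDr mxE. Qed.

Lemma dot0 (x : V) : dot x 0 = 0.
Proof. by rewrite /dot linear0 mulmx0 mxE. Qed.

Lemma dot_sum (T : Type) (x : V) (s : seq T) (F : T -> V) :
  dot x (\sum_(p <- s) F p) = \sum_(p <- s) dot x (F p).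
Proof. exact: (big_morph _ (dotD x) (dot0 x)). Qed.

Variables (Phi S : seq V) (k : nat) (Rg : set V).

Lemma under_chain_dot_le i a x :
  Rg x -> (i <= k)%N -> under_chain Phi S k Rg i a -> dot x a <= i%:R.
Proof.
move=> Rx le_ik; rewrite /under_chain le_ik andbT.
by case: posnP => [->|_ [_ /(_ x Rx) /ltW]].
Qed.

Lemma decomp_value_dot_le a r x :
  Rg x -> (r <= k)%N -> decomp_value (under_chain Phi S k Rg) a r ->
  dot x a <= r%:R.
Proof.
move=> Rx le_rk [s [-> Is Er]].
rewrite Er dot_sum natr_sum !big_seq; apply: ler_sum => p ps.
apply: (under_chain_dot_le Rx _ (Is p ps)).
by apply: leq_trans le_rk; rewrite Er (big_rem _ ps) leq_addr.
Qed.

End PseudomaximalAlcove.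

Theorem lemma12 (R : realType) (n : nat) (Phi S : seq 'rV[R]_n) (k : nat)
  (Rg B : set 'rV[R]_n) (t : nat) (a : 'rV[R]_n) :
  root_system Phi -> irreducible_rs Phi -> simple_system Phi S ->
  (0 < k)%N ->
  dominant_region Phi S k Rg ->
  pseudomaximal_alcove Phi S k Rg B ->
  (0 < t)%N -> (t <= k)%N ->
  pos_root Phi S a ->
  (exists x0, Rg x0 /\ t%:R < dot x0 a) ->
  forall x, B x -> t%:R < dot x a.
Proof.
move=> _ _ _ _ _ [_ rB] _ le_tk pos_a [x0 [Rx0 lt_t_x0]] x Bx.
have [r [[dec_r _] Br]] := rB a pos_a.
have lt_tr : (t < r)%N.
  rewrite ltnNge; apply/negP => le_rt.
  have := decomp_value_dot_le Rx0 (leq_trans le_rt le_tk) dec_r.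
  by rewrite leNgt (le_lt_trans _ lt_t_x0) // ler_nat.
apply: le_lt_trans (proj1 (Br x Bx)).
by rewrite lerBrDr natr1 ler_nat.
Qed.
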